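(* Let $\mathcal{G}=\{\mathcal{V},\mathcal{E},\boldsymbol{W}\}$ be a connected undirected weighted graph with $N$ vertices, with graph Laplacian $\boldsymbol{L}=\boldsymbol{D}-\boldsymbol{W}=\boldsymbol{U}\boldsymbol{\Lambda}\boldsymbol{U}^T$, where $\boldsymbol{U}=[\boldsymbol{u}_1,\dots,\boldsymbol{u}_N]$ is orthonormal and the eigenvalues are ordered $0=\lambda_1\le\dots\le\lambda_N$. Fix integers $1\le f_L\le f_U\le N$ and let $$C_b=\{\boldsymbol{x}\in\mathbb{R}^N:\ \boldsymbol{u}_i^T\boldsymbol{x}=0\ \text{for all } i\notin[f_L,f_U]\}.$$ Let $\mathcal{V}'=\{v_1,\dots,v_M\}\subseteq\mathcal{V}=\{1,\dots,N\}$ be a set of $M$ distinct sampled vertices and let $\boldsymbol{x}\in C_b$ be a signal with observed signs $s_i=\mathrm{sign}(x_{v_i})\in\{-1,0,1\}$, $i=1,\dots,M$ (with $\mathrm{sign}(0)=0$). Let $$C_v=\{\boldsymbol{y}\in\mathbb{R}^N:\ s_i y_{v_i}\ge 0 \text{ if } s_i\neq 0,\ y_{v_i}=0 \text{ if } s_i=0,\ i=1,\dots,M\},$$ and $C=C_b\cap C_v$. Define $\boldsymbol{P}_b=\boldsymbol{U}\boldsymbol{\Gamma}\boldsymbol{U}^T$, where $\boldsymbol{\Gamma}$ is diagonal with $\Gamma_{kk}=1$ if $k\in[f_L,f_U]$ and $0$ otherwise, and define $\boldsymbol{P}_v:\mathbb{R}^N\to\mathbb{R}^N$ by $(\boldsymbol{P}_v\boldsymbol{y})_j=0$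 if $j=v_i$ for some $i$ with $\mathrm{sign}(y_j)\neq s_i$, and $(\boldsymbol{P}_v\boldsymbol{y})_j=y_j$ otherwise. For an arbitrary initial point $\boldsymbol{x}_0\in\mathbb{R}^N$ define $\boldsymbol{x}_{n+1}=\boldsymbol{P}_b\boldsymbol{P}_v\boldsymbol{x}_n$. Then the sequence $\{\boldsymbol{x}_n\}$ converges to some point $\boldsymbol{x}^*\in C$, and the convergence rate is independent of the choice of the initial point $\boldsymbol{x}_0$.
   Context: $\boldsymbol{D}$ is the diagonal degree matrix with $D_{ii}=\sum_j W_{ij}$, and $W_{ij}>0$ iff $(i,j)\in\mathcal{E}$. $C_b$ is the set of band-limited signals with passband $[f_L,f_U]$; $\boldsymbol{P}_b$ is the orthogonal projection onto $C_b$ and $\boldsymbol{P}_v$ is the projection onto the closed convex cone $C_v$ of signals consistent with the observed signs. *)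

From HB Require Import structures.
From mathcomp Require Import all_boot all_order all_algebra.
From mathcomp Require Import all_classical all_reals all_analysis.
Set Implicit Arguments. Unset Strict Implicit. Unset Printing Implicit Defensive.
Import Order.TTheory GRing.Theory Num.Theory.
Local Open Scope ring_scope.
Local Open Scope classical_set_scope.

Section GraphSignal.
Variable R : realType.

Definition degmx n (W : 'M[R]_n) : 'M[R]_n := diag_mx (\row_i \sum_j W i j).

Definition laplacian n (W : 'M[R]_n) : 'M[R]_n := degmx W - W.

Definition adjrel n (W : 'M[R]_n) : rel 'I_n := fun i j => 0 < W i j.

Definition connected_graph n (W : 'M[R]_n) : Prop :=
  forall i j : 'I_n, connect (adjrel W) i j.

(* 0-based index k corresponds to the paper's index k+1 *)
Definition in_band n (fL fU : nat) (k : 'I_n) : bool := (fL <= k.+1 <= fU)%N.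

Definition Cb n (U : 'M[R]_n) (fL fU : nat) : set 'cV[R]_n :=
  [set x | forall i : 'I_n, ~~ in_band fL fU i -> (U^T *m x) i 0 = 0].

Definition Cv n M (v : 'I_M -> 'I_n) (s : 'I_M -> R) : set 'cV[R]_n :=
  [set y | forall i : 'I_M,
     (s i != 0 -> 0 <= s i * y (v i) 0) /\ (s i = 0 -> y (v i) 0 = 0)].

Definition Pb n (U : 'M[R]_n) (fL fU : nat) : 'M[R]_n :=
  U *m diag_mx (\row_k (if in_band fL fU k then 1 else 0)) *m U^T.

Definition Pv n M (v : 'I_M -> 'I_n) (s : 'I_M -> R) (y : 'cV[R]_n) : 'cV[R]_n :=
  \col_j (if [exists i : 'I_M, (v i == j) && (Num.sg (y j 0) != s i)]
          then 0 else y j 0).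

Definition enorm n (x : 'cV[R]_n) : R := Num.sqrt (\sum_j (x j 0) ^+ 2).

End GraphSignal.

From HB Require Import structures.
From mathcomp Require Import all_boot all_order all_algebra.
From mathcomp Require Import all_classical all_reals all_analysis.
From mathcomp Require Import ring lra.
Set Implicit Arguments.
Unset Strict Implicit.
Unset Printing Implicit Defensive.

Import Order.TTheory GRing.Theory Num.Theory numFieldNormedType.Exports.
Local Open Scope ring_scope.
Local Open Scope classical_set_scope.

(* T = P_b P_v is Fejer monotone with respect to C: for z in C,
   |T x - z|^2 + |x - P_v x|^2 <= |x - z|^2, since P_b is the orthogonal projection
   onto the subspace C_b and P_v acts coordinatewise.  Hoffman's error bound for the
   sign constraints inside C_b gives linear regularity, dist(x, C)^2 <= k |x - P_v x|^2
   on C_b.  Hence dist(x_n, C)^2 shrinks by the factor 1 - 1/(k + 2) at every step,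
   whatever x_0, and Fejer monotonicity makes (x_n) Cauchy with the same geometric
   rate; its limit lies in C because C is closed. *)

Section GeometricSequences.
Variable R : realType.
Implicit Types (a : nat -> R) (B c e l r : R).

Lemma cvg_geometric c r : 0 <= r < 1 -> (fun n => c * r ^+ n) @ \oo --> 0.
Proof.
move=> /andP[r0 r1]; rewrite -(mulr0 c); apply: cvgM; first exact: cvg_cst.
by apply: cvg_expr; rewrite ger0_norm.
Qed.

Lemma geometric_lt c r e : 0 <= r < 1 -> 0 < e -> exists n, c * r ^+ n < e.
Proof.
move=> r01 e0; have [n _ Hn] := (cvgrPdist_lt _ _).1 (cvg_geometric c r01) e e0.
exists n; have := Hn n (leqnn n); rewrite /= sub0r normrN.
exact: le_lt_trans (ler_norm _).
Qed.

Lemma cvg_geometric_bound a l c r : 0 <= r < 1 ->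
  (forall n, `|a n - l| <= c * r ^+ n) -> a @ \oo --> l.
Proof.
move=> r01 bound.
apply: (@squeeze_cvgr _ _ _ _ (fun n => l - c * r ^+ n) (fun n => l + c * r ^+ n)).
- by apply: nearW => n; move: (bound n); rewrite ler_distl => /andP[-> ->].
- by rewrite -[X in _ --> X]subr0; apply: cvgB; [exact: cvg_cst | exact: cvg_geometric].
- by rewrite -[X in _ --> X]addr0; apply: cvgD; [exact: cvg_cst | exact: cvg_geometric].
Qed.

Lemma cauchy_geometric a B r : 0 <= r < 1 ->
  (forall n m, (n <= m)%N -> (a m - a n) ^+ 2 <= B * r ^+ n) ->
  exists l, forall n, (a n - l) ^+ 2 <= B * r ^+ n.
Proof.
move=> r01 cauchy_a.
have dist_a n m : (n <= m)%N -> `|a m - a n| <= Num.sqrt (B * r ^+ n).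
  by move=> nm; rewrite -sqrtr_sqr; apply: ler_wsqrtr; exact: cauchy_a.
have cvg_a : cvg (a @ \oo).
  apply: cauchy_cvg; apply: cauchy_exP => e e0.
  have [n Bn_lt] := geometric_lt B r01 (exprn_gt0 2 e0).
  exists (a n); exists n => // m /= nm; rewrite -ball_normE /ball_ /= distrC.
  apply: le_lt_trans (dist_a n m nm) _.
  by rewrite -[e]ger0_norm ?ltW // -sqrtr_sqr ltr_sqrt // exprn_gt0.
exists (lim (a @ \oo)) => n.
have Bn0 : 0 <= B * r ^+ n by apply: le_trans (cauchy_a n n (leqnn n)); rewrite sqr_ge0.
set l := lim _; set d := Num.sqrt (B * r ^+ n).
have l_le : l <= a n + d.
  apply: limr_le => //; exists n => // m /= nm.
  by have := dist_a n m nm; rewrite ler_distl => /andP[_]; rewrite addrC.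
have le_l : a n - d <= l.
  apply: limr_ge => //; exists n => // m /= nm.
  by have := dist_a n m nm; rewrite ler_distl => /andP[+ _]; rewrite lerBlDl addrC.
by rewrite -[B * _](sqr_sqrtr Bn0) -/d -sqrrN opprB; nra.
Qed.

End GeometricSequences.

Section SquaredNorm.
Variables (R : realFieldType) (N : nat).
Implicit Types x y z : 'cV[R]_N.

Definition sqnorm x := \sum_j x j 0 ^+ 2.
Definition l1norm x := \sum_j `|x j 0|.

Lemma sqnorm_ge0 x : 0 <= sqnorm x.
Proof. by apply: sumr_ge0 => j _; rewrite sqr_ge0. Qed.

Lemma l1norm_ge0 x : 0 <= l1norm x.
Proof. by apply: sumr_ge0. Qed.

Lemma sqr_coord_le_sqnorm x j : x j 0 ^+ 2 <= sqnorm x.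
Proof. by rewrite /sqnorm (bigD1 j) //= lerDl; apply: sumr_ge0 => k _; rewrite sqr_ge0. Qed.

Lemma normr_coord_le_l1norm x j : `|x j 0| <= l1norm x.
Proof. by rewrite /l1norm (bigD1 j) //= lerDl; apply: sumr_ge0. Qed.

Lemma sqnorm_le_l1norm x : sqnorm x <= l1norm x ^+ 2.
Proof.
rewrite /sqnorm expr2 {1}/l1norm mulr_suml; apply: ler_sum => j _.
by rewrite -real_normK ?num_real // expr2 ler_wpM2l ?normr_coord_le_l1norm.
Qed.

Lemma sqnormN x : sqnorm (- x) = sqnorm x.
Proof. by apply: eq_bigr => j _; rewrite mxE sqrrN. Qed.

Lemma sqnormB_sym x y : sqnorm (x - y) = sqnorm (y - x).
Proof. by rewrite -sqnormN opprB. Qed.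

Lemma sqnormB_le x y z : sqnorm (x - y) <= 2 * sqnorm (x - z) + 2 * sqnorm (z - y).
Proof.
rewrite /sqnorm !mulr_sumr -big_split; apply: ler_sum => j _; rewrite /= !mxE.
by have := sqr_ge0 (x j 0 - z j 0 - (z j 0 - y j 0)); lra.
Qed.

Lemma sqnorm_mx x : sqnorm x = (x^T *m x) 0 0.
Proof. by rewrite mxE; apply: eq_bigr => j _; rewrite mxE expr2. Qed.

Lemma sqnorm_orthogonal (Q : 'M[R]_N) x : Q^T *m Q = 1%:M -> sqnorm (Q *m x) = sqnorm x.
Proof. by move=> QTQ; rewrite !sqnorm_mx trmx_mul mulmxA -(mulmxA x^T) QTQ mulmx1. Qed.

Lemma l1normZ a x : l1norm (a *: x) = `|a| * l1norm x.
Proof. by rewrite /l1norm mulr_sumr; apply: eq_bigr => j _; rewrite mxE normrM. Qed.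

Lemma l1norm0 : l1norm 0 = 0.
Proof. by rewrite -(scale0r 0) l1normZ normr0 mul0r. Qed.

Lemma l1normB_le x y z : l1norm (x - z) <= l1norm (x - y) + l1norm (y - z).
Proof.
rewrite /l1norm -big_split; apply: ler_sum => j _; rewrite /= !mxE.
by rewrite -[x j 0 - z j 0](subrKA (y j 0)) ler_normD.
Qed.

Definition sqnorm_closed (A : set 'cV[R]_N) :=
  forall x, (forall e, 0 < e -> exists2 z, A z & sqnorm (x - z) < e) -> A x.

Lemma sqnorm_closedI A B : sqnorm_closed A -> sqnorm_closed B -> sqnorm_closed (A `&` B).
Proof.
move=> clA clB x approx; split; [apply: clA | apply: clB] => e /approx[z [Az Bz] xz_lt];
  by exists z.
Qed.

End SquaredNorm.

Lemma ge0_approx (R : realFieldType) (a : R) :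
  (forall e, 0 < e -> exists2 b, 0 <= b & (a - b) ^+ 2 < e) -> 0 <= a.
Proof.
move=> approx; rewrite leNgt; apply/negP => a_lt0.
have a2_gt0 : 0 < a ^+ 2 by rewrite -sqrrN exprn_gt0 // oppr_gt0.
by have [b b_ge0] := approx _ a2_gt0; nra.
Qed.

Lemma eq0_approx (R : realFieldType) (a : R) : (forall e, 0 < e -> a ^+ 2 < e) -> a = 0.
Proof.
move=> approx; apply/eqP; rewrite eq_le -oppr_ge0.
by apply/andP; split; apply: ge0_approx => e /approx; exists 0; rewrite // subr0 ?sqrrN.
Qed.

Lemma cauchy_geometric_vec (R : realType) (N : nat) (y : nat -> 'cV[R]_N) (B r : R) :
  0 <= r < 1 -> (forall n m, (n <= m)%N -> sqnorm (y m - y n) <= B * r ^+ n) ->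
  exists l, forall n, sqnorm (y n - l) <= N%:R * B * r ^+ n.
Proof.
move=> r01 cauchy_y.
have [l l_bound] : {l : 'I_N -> R & forall j n, (y n j 0 - l j) ^+ 2 <= B * r ^+ n}.
  apply: (choice (P := fun j lj => forall n, (y n j 0 - lj) ^+ 2 <= B * r ^+ n)) => j.
  apply: (@cauchy_geometric _ (fun n => y n j 0) B r r01) => n m nm.
  by apply: le_trans (cauchy_y n m nm); have := sqr_coord_le_sqnorm (y m - y n) j; rewrite !mxE.
exists (\col_j l j) => n; rewrite -mulrA mulr_natl -[X in _ *+ X]card_ord -sumr_const.
by apply: ler_sum => j _; rewrite !mxE.
Qed.

Lemma enormE (R : realType) (N : nat) (x : 'cV[R]_N) : enorm x = Num.sqrt (sqnorm x).
Proof. by []. Qed.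

Lemma normr_coord_le_enorm (R : realType) (N : nat) (x : 'cV[R]_N) j : `|x j 0| <= enorm x.
Proof. by rewrite enormE -sqrtr_sqr ler_wsqrtr ?sqr_coord_le_sqnorm. Qed.

Section Hoffman.
Variables (R : realFieldType) (N : nat).
Local Notation vec := 'cV[R]_N.
Implicit Types (x y z w : vec) (A : set vec) (c : 'I_N * bool) (cs : seq ('I_N * bool)).

Definition constraint_val c x := (-1) ^+ c.2 * x c.1 0.
Definition violation c x := Num.max 0 (- constraint_val c x).
Definition total_violation cs x := \sum_(c <- cs) violation c x.
Definition satisfies cs x := forall c, c \in cs -> 0 <= constraint_val c x.

Definition is_subspace A := A 0 /\ forall a x y, A x -> A y -> A (a *: x + y).

Definition hoffman_bound A cs k := forall x, A x ->
  exists2 z, A z /\ satisfies cs z & l1norm (x - z) <= k * total_violation cs x.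

Lemma constraint_val_segment c x z t : constraint_val c (x + t *: (z - x)) =
  constraint_val c x + t * (constraint_val c z - constraint_val c x).
Proof. by rewrite /constraint_val !mxE; ring. Qed.

Lemma constraint_val_eq0 c x : (constraint_val c x == 0) = (x c.1 0 == 0).
Proof. by rewrite mulf_eq0 signr_eq0. Qed.

Lemma satisfies_cons c cs z :
  0 <= constraint_val c z -> satisfies cs z -> satisfies (c :: cs) z.
Proof. by move=> cz sat_z c'; rewrite in_cons => /orP[/eqP -> // | /sat_z]. Qed.

Lemma violation_ge0 c x : 0 <= violation c x.
Proof. by rewrite /violation le_max lexx. Qed.

Lemma violation_eq0 c x : 0 <= constraint_val c x -> violation c x = 0.
Proof. by move=> cx; rewrite /violation max_l // oppr_le0. Qed.

Lemma violation_le0 c x : constraint_val c x <= 0 -> violation c x = `|x c.1 0|.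
Proof.
move=> cx; rewrite /violation max_r ?oppr_ge0 // -ler0_norm //.
by rewrite normrM normr_sign mul1r.
Qed.

Lemma violation_lipschitz c x y : violation c y <= violation c x + l1norm (x - y).
Proof.
have cxy : `|constraint_val c x - constraint_val c y| <= l1norm (x - y).
  apply: le_trans (normr_coord_le_l1norm (x - y) c.1).
  by rewrite -mulrBr normrM normr_sign mul1r !mxE.
rewrite /violation ge_max; set M := Num.max _ _.
have M_ge0 : 0 <= M by rewrite le_max lexx.
have M_ge : - constraint_val c x <= M by rewrite le_max lexx orbT.
have := ler_norm (constraint_val c x - constraint_val c y).
by have := l1norm_ge0 (x - y); move=> *; apply/andP; split; lra.
Qed.

Lemma total_violation_cons c cs x :
  total_violation (c :: cs) x = violation c x + total_violation cs x.
Proof. by rewrite /total_violation big_cons. Qed.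

Lemma total_violation_ge0 cs x : 0 <= total_violation cs x.
Proof. by apply: sumr_ge0 => c _; exact: violation_ge0. Qed.

Lemma total_violation_lipschitz cs x y :
  total_violation cs y <= total_violation cs x + (size cs)%:R * l1norm (x - y).
Proof.
elim: cs => [|c cs IH]; first by rewrite /total_violation !big_nil mul0r addr0.
rewrite !total_violation_cons /= -add1n natrD mulrDl mul1r.
by have := violation_lipschitz c x y; lra.
Qed.

Lemma total_violation_le cs x B : (forall c, c \in cs -> violation c x <= B) ->
  total_violation cs x <= (size cs)%:R * B.
Proof.
elim: cs => [|c cs IH] le_B; first by rewrite /total_violation big_nil mul0r.
rewrite total_violation_cons /= -add1n natrD mulrDl mul1r lerD ?le_B ?mem_head //.
by apply: IH => c' c'_cs; apply: le_B; rewrite in_cons c'_cs orbT.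
Qed.

Lemma total_violation_segment cs x z t : 0 <= t <= 1 -> satisfies cs z ->
  total_violation cs (x + t *: (z - x)) <= total_violation cs x.
Proof.
move=> /andP[t_ge0 t_le1] sat_z; rewrite /total_violation !big_seq.
apply: ler_sum => c /sat_z cz; rewrite /violation constraint_val_segment ge_max.
set M := Num.max _ _; have M_ge0 : 0 <= M by rewrite le_max lexx.
have M_ge : - constraint_val c x <= M by rewrite le_max lexx orbT.
by rewrite M_ge0 /=; nra.
Qed.

Lemma subspace_segment A x z t : is_subspace A -> A x -> A z -> A (x + t *: (z - x)).
Proof.
move=> [A0 A_lin] Ax Az.
have Anx : A (- x) by rewrite -scaleN1r -[_ *: x]addr0; exact: A_lin.
have Azx : A (z - x) by rewrite -[z]scale1r; exact: A_lin.
by rewrite addrC; exact: A_lin.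
Qed.

Lemma subspace_coord0 A j : is_subspace A -> is_subspace (A `&` [set y | y j 0 = 0]).
Proof.
move=> [A0 A_lin]; split; first by split => //=; rewrite mxE.
move=> a x y [Ax xj0] [Ay yj0]; split; first exact: A_lin.
by rewrite /= !mxE xj0 yj0 mulr0 addr0.
Qed.

Lemma subspace_coord_retraction A j : is_subspace A -> exists2 g, 0 <= g &
  forall x, A x -> exists2 w, (A `&` [set y | y j 0 = 0]) w & l1norm (x - w) <= g * `|x j 0|.
Proof.
move=> [A0 A_lin].
have [[d [Ad dj_neq0]] | A_j0] := pselect (exists d, A d /\ d j 0 != 0).
  exists (l1norm d / `|d j 0|); first by rewrite divr_ge0 ?l1norm_ge0.
  move=> x Ax; exists ((- (x j 0 / d j 0)) *: d + x).
    by split; [exact: A_lin | rewrite /= !mxE mulNr divfK // addNr].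
  rewrite opprD addrCA subrr addr0 -scaleNr opprK l1normZ normrM normfV.
  by rewrite -mulrA mulrC [_^-1 * _]mulrC.
exists 0 => // x Ax; exists x; last by rewrite subrr l1norm0 mul0r.
by split => //=; case: (eqVneq (x j 0) 0) => // xj_neq0; case: A_j0; exists x.
Qed.

(* If x violates c, first zero the coordinate c.1
   inside A, at a cost proportional to the violation; if x satisfies c strictly,
   move from x towards a solution z2 for cs until c becomes active, which does not
   increase the other violations by convexity.  Either way we land in
   A `&` [set y | y c.1 0 = 0], where c holds automatically. *)
Section HoffmanStep.
Variables (A : set vec) (c : 'I_N * bool) (cs : seq ('I_N * bool)) (g k k' : R).
Let A' := A `&` [set y | y c.1 0 = 0].
Hypotheses (subA : is_subspace A) (g_ge0 : 0 <= g) (k_ge0 : 0 <= k) (k'_ge0 : 0 <= k').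
Hypothesis retract : forall x, A x -> exists2 w, A' w & l1norm (x - w) <= g * `|x c.1 0|.
Hypotheses (hbA : hoffman_bound A cs k) (hbA' : hoffman_bound A' cs k').
Let K := g + k + k' + k' * (size cs)%:R * g.

Lemma hoffman_step_violated x : A x -> constraint_val c x <= 0 ->
  exists2 z, A z /\ satisfies (c :: cs) z & l1norm (x - z) <= K * total_violation (c :: cs) x.
Proof.
move=> Ax cx_le0; have [w [Aw wj0] xw_le] := retract Ax.
have [z [[Az zj0] sat_z] wz_le] := hbA' (conj Aw wj0).
exists z; first by split => //; apply: satisfies_cons; rewrite // /constraint_val zj0 mulr0.
rewrite total_violation_cons violation_le0 // /K.
set V := total_violation cs x; set m := (size cs)%:R.
have wz_le' : l1norm (w - z) <= k' * (V + m * (g * `|x c.1 0|)).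
  apply: le_trans wz_le _; apply: ler_wpM2l => //.
  apply: le_trans (total_violation_lipschitz cs x w) _.
  by apply: lerD => //; apply: ler_wpM2l; rewrite ?ler0n.
have V_ge0 : 0 <= V := total_violation_ge0 cs x.
have m_ge0 : 0 <= m := ler0n _ _.
have a_ge0 := normr_ge0 (x c.1 0).
have := l1normB_le x w z.
have := mulr_ge0 (mulr_ge0 (mulr_ge0 k'_ge0 m_ge0) g_ge0) V_ge0.
have := mulr_ge0 g_ge0 V_ge0; have := mulr_ge0 k_ge0 a_ge0; have := mulr_ge0 k_ge0 V_ge0.
have := mulr_ge0 k'_ge0 a_ge0.
by lra.
Qed.

Lemma hoffman_step_satisfied x : A x -> 0 < constraint_val c x ->
  exists2 z, A z /\ satisfies (c :: cs) z & l1norm (x - z) <= K * total_violation (c :: cs) x.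
Proof.
move=> Ax cx_gt0; have [z2 [Az2 sat_z2] xz2_le] := hbA Ax.
rewrite total_violation_cons violation_eq0 ?ltW // add0r /K.
have V_ge0 := total_violation_ge0 cs x.
have kmgV_ge0 := mulr_ge0 (mulr_ge0 (mulr_ge0 k'_ge0 (ler0n _ (size cs))) g_ge0) V_ge0.
have gV_ge0 := mulr_ge0 g_ge0 V_ge0; have k'V_ge0 := mulr_ge0 k'_ge0 V_ge0.
have [cz2_ge0 | cz2_lt0] := leP 0 (constraint_val c z2).
  by exists z2; [split => //; exact: satisfies_cons | lra].
pose t := constraint_val c x / (constraint_val c x - constraint_val c z2).
have d_gt0 : 0 < constraint_val c x - constraint_val c z2 by lra.
have t_ge0 : 0 <= t by rewrite divr_ge0 ?ltW.
have t_le1 : t <= 1 by rewrite ler_pdivrMr // mul1r; lra.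
pose w := x + t *: (z2 - x).
have wj0 : w c.1 0 = 0.
  apply/eqP; rewrite -constraint_val_eq0 constraint_val_segment /t; apply/eqP.
  by field; rewrite gt_eqF.
have [z [[Az zj0] sat_z] wz_le] := hbA' (conj (subspace_segment t subA Ax Az2) wj0).
exists z; first by split => //; apply: satisfies_cons; rewrite // /constraint_val zj0 mulr0.
have xw_le : l1norm (x - w) <= k * total_violation cs x.
  rewrite /w opprD addrA subrr sub0r -scalerN opprB l1normZ ger0_norm //.
  by apply: le_trans xz2_le; apply: ler_piMl; rewrite ?l1norm_ge0.
have wz_le' : l1norm (w - z) <= k' * total_violation cs x.
  apply: le_trans wz_le _; apply: ler_wpM2l => //.
  by apply: total_violation_segment; rewrite ?t_ge0.
by have := l1normB_le x w z; lra.
Qed.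

Lemma hoffman_step : hoffman_bound A (c :: cs) K.
Proof.
move=> x Ax; case: (leP (constraint_val c x) 0).
  exact: hoffman_step_violated.
exact: hoffman_step_satisfied.
Qed.

End HoffmanStep.

Theorem exists_hoffman_bound A cs : is_subspace A -> exists2 k, 0 <= k & hoffman_bound A cs k.
Proof.
elim: cs A => [|c cs IH] A subA.
  exists 0 => // x Ax; exists x; last by rewrite subrr l1norm0 mul0r.
  by split => // c; rewrite in_nil.
have [g g_ge0 retract] := subspace_coord_retraction c.1 subA.
have [k k_ge0 hbA] := IH A subA.
have [k' k'_ge0 hbA'] := IH _ (subspace_coord0 c.1 subA).
exists (g + k + k' + k' * (size cs)%:R * g); first by rewrite !addr_ge0 // !mulr_ge0.
exact: hoffman_step subA g_ge0 k_ge0 k'_ge0 retract hbA hbA'.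
Qed.

End Hoffman.

Section SignedSampling.
Variables (R : realType) (N M : nat) (U : 'M[R]_N) (fL fU : nat).
Variables (v : 'I_M -> 'I_N) (s : 'I_M -> R).
Hypothesis U_orth : U^T *m U = 1%:M.
Hypothesis s_sign : forall i, Num.sg (s i) = s i.
Implicit Types x y z : 'cV[R]_N.

Lemma U_orthT : U *m U^T = 1%:M.
Proof. exact: mulmx1C. Qed.

Lemma sqnorm_Pb_le x : sqnorm (Pb U fL fU *m x) <= sqnorm x.
Proof.
rewrite /Pb -!mulmxA sqnorm_orthogonal //.
rewrite -(sqnorm_orthogonal x (Q := U^T)) ?trmxK ?U_orthT //.
rewrite /sqnorm; apply: ler_sum => k _; rewrite mul_diag_mx !mxE.
by case: ifP => _; rewrite ?mul1r ?mul0r // expr0n sqr_ge0.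
Qed.

Lemma Pb_id z : Cb U fL fU z -> Pb U fL fU *m z = z.
Proof.
move=> Cb_z; rewrite /Pb -!mulmxA.
have -> : diag_mx (\row_k (if in_band fL fU k then 1 else 0)) *m (U^T *m z) = U^T *m z.
  apply/matrixP => k j; rewrite (ord1 j) mul_diag_mx mxE mxE.
  by case: ifPn => k_in; [rewrite mul1r | rewrite mul0r Cb_z].
by rewrite mulmxA U_orthT mul1mx.
Qed.

Lemma Pb_Cb x : Cb U fL fU (Pb U fL fU *m x).
Proof.
move=> k k_out; rewrite /Pb !mulmxA U_orth mul1mx -mulmxA mul_diag_mx !mxE.
by rewrite (negbTE k_out) mul0r.
Qed.

Lemma Cb_subspace : is_subspace (Cb U fL fU).
Proof.
split; first by move=> k _; rewrite mulmx0 mxE.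
move=> a x y Cb_x Cb_y k k_out; rewrite mulmxDr -scalemxAr.
by move: (Cb_x k k_out) (Cb_y k k_out); rewrite !mxE => -> ->; rewrite mulr0 addr0.
Qed.

Lemma Cb_closed : sqnorm_closed (Cb U fL fU).
Proof.
move=> x approx k k_out; apply: eq0_approx => e /approx[z Cb_z xz_lt].
apply: le_lt_trans xz_lt.
have -> : (U^T *m x) k 0 = (U^T *m (x - z)) k 0.
  by rewrite mulmxBr [RHS]mxE [X in _ + X]mxE Cb_z // subr0.
apply: le_trans (sqr_coord_le_sqnorm _ k) _.
by rewrite sqnorm_orthogonal ?trmxK ?U_orthT.
Qed.

Lemma Cv_closed : sqnorm_closed (Cv v s).
Proof.
move=> x approx i.
have coord_approx e : 0 < e -> exists2 z, Cv v s z & (x (v i) 0 - z (v i) 0) ^+ 2 < e.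
  move=> /approx[z Cv_z xz_lt]; exists z => //.
  by apply: le_lt_trans xz_lt; have := sqr_coord_le_sqnorm (x - z) (v i); rewrite !mxE.
split=> [si_neq0 | si0].
  have si2 : s i ^+ 2 = 1 by rewrite -s_sign sqr_sg si_neq0.
  apply: ge0_approx => e /coord_approx[z Cv_z xz_lt].
  exists (s i * z (v i) 0); first exact: (Cv_z i).1.
  by rewrite -mulrBr exprMn si2 mul1r.
apply: eq0_approx => e /coord_approx[z Cv_z xz_lt].
by rewrite -[x _ _]subr0 -((Cv_z i).2 si0).
Qed.

Lemma Pv_pythagoras x z j : Cv v s z ->
  (Pv v s x j 0 - z j 0) ^+ 2 + (x j 0 - Pv v s x j 0) ^+ 2 <= (x j 0 - z j 0) ^+ 2.
Proof.
move=> Cv_z; rewrite mxE; case: ifPn => [/existsP[i /andP[/eqP <- sg_neq]] | _];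
  last by rewrite subrr expr0n addr0.
suff : x (v i) 0 * z (v i) 0 <= 0 by nra.
have [si0 | si_neq0] := eqVneq (s i) 0; first by rewrite (Cv_z i).2 // mulr0.
have si2 : s i ^+ 2 = 1 by rewrite -s_sign sqr_sg si_neq0.
have sx_le0 : s i * x (v i) 0 <= 0.
  rewrite leNgt; apply: contra sg_neq => sx_gt0; apply/eqP.
  have := gtr0_sg sx_gt0; rewrite sgrM s_sign => sx1.
  by rewrite -[Num.sg _]mul1r -si2 expr2 -mulrA sx1 mulr1.
have -> : x (v i) 0 * z (v i) 0 = (s i * x (v i) 0) * (s i * z (v i) 0).
  by rewrite mulrACA -expr2 si2 mul1r.
by rewrite mulr_le0_ge0 // (Cv_z i).1.
Qed.

Lemma Pb_Pv_fejer x z : (Cb U fL fU `&` Cv v s) z ->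
  sqnorm (Pb U fL fU *m Pv v s x - z) + sqnorm (x - Pv v s x) <= sqnorm (x - z).
Proof.
move=> [Cb_z Cv_z].
rewrite -{1}(Pb_id Cb_z) -mulmxBr; apply: le_trans (lerD (sqnorm_Pb_le _) (lexx _)) _.
rewrite /sqnorm -big_split; apply: ler_sum => j _.
by move: (Pv_pythagoras x j Cv_z); rewrite !mxE.
Qed.

Definition sign_constraints : seq ('I_N * bool) :=
  [seq (v i, false) | i <- enum 'I_M & 0 <= s i] ++
  [seq (v i, true) | i <- enum 'I_M & s i <= 0].

Lemma satisfies_sign_constraints z : satisfies sign_constraints z -> Cv v s z.
Proof.
move=> sat_z i.
have z_ge0 : 0 <= s i -> 0 <= z (v i) 0.
  move=> si_ge0; have := sat_z (v i, false); rewrite /constraint_val /= expr0 mul1r; apply.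
  by rewrite mem_cat map_f // mem_filter si_ge0 mem_enum.
have z_le0 : s i <= 0 -> z (v i) 0 <= 0.
  move=> si_le0; have := sat_z (v i, true); rewrite /constraint_val /= expr1 mulN1r oppr_ge0.
  by apply; rewrite mem_cat (map_f (fun i => (v i, true))) ?orbT // mem_filter si_le0 mem_enum.
split=> [si_neq0 | si0]; last by apply/eqP; rewrite eq_le z_le0 ?z_ge0 ?si0.
have [si_lt0 | si_gt0 | si0] := ltgtP (s i) 0.
- by rewrite mulr_le0 ?z_le0 ?ltW.
- by rewrite mulr_ge0 ?z_ge0 ?ltW.
- by rewrite si0 eqxx in si_neq0.
Qed.

Lemma Pv_sampled x i : Num.sg (x (v i) 0) != s i -> Pv v s x (v i) 0 = 0.
Proof. by move=> sg_neq; rewrite mxE ifT //; apply/existsP; exists i; rewrite eqxx sg_neq. Qed.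

Lemma violation_sign_constraint x c : c \in sign_constraints ->
  violation c x <= `|x c.1 0 - Pv v s x c.1 0|.
Proof.
rewrite mem_cat => /orP[] /mapP[i]; rewrite mem_filter => /andP[si _] -> /=;
  rewrite /violation /constraint_val /= ?expr0 ?expr1 ?mul1r ?mulN1r ?opprK.
  have [x_ge0 | x_lt0] := leP 0 (x (v i) 0); first by rewrite max_l ?oppr_le0.
  have sg_neq : Num.sg (x (v i) 0) != s i.
    by rewrite ltr0_sg //; apply/eqP => si_eq; rewrite -si_eq in si; lra.
  by rewrite Pv_sampled // subr0 max_r ?ltr0_norm // oppr_ge0 ltW.
have [x_le0 | x_gt0] := leP (x (v i) 0) 0; first by [].
have sg_neq : Num.sg (x (v i) 0) != s i.
  by rewrite gtr0_sg //; apply/eqP => si_eq; rewrite -si_eq in si; lra.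
by rewrite Pv_sampled // subr0 gtr0_norm.
Qed.

Lemma Cb_Cv_regular : exists2 k, 0 <= k & forall x, Cb U fL fU x ->
  exists2 z, (Cb U fL fU `&` Cv v s) z & sqnorm (x - z) <= k * sqnorm (x - Pv v s x).
Proof.
have [k k_ge0 hb] := exists_hoffman_bound sign_constraints Cb_subspace.
pose m : R := (size sign_constraints)%:R.
exists ((k * m) ^+ 2); first exact: sqr_ge0.
move=> x /hb[z [Cb_z sat_z] xz_le]; exists z; first by split; last exact: satisfies_sign_constraints.
have viol_le : total_violation sign_constraints x <= m * Num.sqrt (sqnorm (x - Pv v s x)).
  apply: total_violation_le => c /violation_sign_constraint /le_trans; apply.
  rewrite -sqrtr_sqr ler_wsqrtr //.
  by have := sqr_coord_le_sqnorm (x - Pv v s x) c.1; rewrite [(x - _) _ _]mxE [X in _ + X]mxE.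
apply: le_trans (sqnorm_le_l1norm _) _.
rewrite -[sqnorm (x - _)]sqr_sqrtr ?sqnorm_ge0 // -exprMn expr2 [X in _ <= X]expr2.
have l1_le : l1norm (x - z) <= k * m * Num.sqrt (sqnorm (x - Pv v s x)).
  by apply: le_trans xz_le _; rewrite -mulrA ler_wpM2l.
by apply: ler_pM; rewrite ?l1norm_ge0.
Qed.

End SignedSampling.

Section FejerRegular.
Variables (R : realType) (N : nat) (C : set 'cV[R]_N) (T : 'cV[R]_N -> 'cV[R]_N).
Variables (gap : 'cV[R]_N -> R) (k : R).
Hypotheses (C_closed : sqnorm_closed C) (gap_ge0 : forall x, 0 <= gap x) (k_ge0 : 0 <= k).
Hypothesis fejer : forall x z, C z -> sqnorm (T x - z) + gap x <= sqnorm (x - z).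
Hypothesis regular : forall x, exists2 z, C z & sqnorm (T x - z) <= k * gap (T x).
Implicit Types x z : 'cV[R]_N.

Definition sqdist x := inf [set sqnorm (x - z) | z in C].

Lemma sqdist_le x z : C z -> sqdist x <= sqnorm (x - z).
Proof.
move=> Cz; apply: ge_inf; last by exists z.
by exists 0 => _ [w _ <-]; exact: sqnorm_ge0.
Qed.

Lemma sqdist_glb x a : (forall z, C z -> a <= sqnorm (x - z)) -> a <= sqdist x.
Proof.
move=> lb; have [z Cz _] := regular x.
apply: lb_le_inf; first by exists (sqnorm (x - z)), z.
by move=> _ [w Cw <-]; exact: lb.
Qed.

Lemma sqdist_ge0 x : 0 <= sqdist x.
Proof. by apply: sqdist_glb => z _; exact: sqnorm_ge0. Qed.

Lemma sqnorm_T_le x z : C z -> sqnorm (T x - z) <= sqnorm (x - z).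
Proof. by move=> Cz; have := fejer x Cz; have := gap_ge0 x; lra. Qed.

Lemma gap_le_sqdist x : gap x <= sqdist x.
Proof.
apply: sqdist_glb => z Cz.
by have := fejer x Cz; have := sqnorm_ge0 (T x - z); lra.
Qed.

Lemma sqdist_T x : sqdist (T x) + gap x <= sqdist x.
Proof.
apply: sqdist_glb => z Cz; apply: le_trans (fejer x Cz).
exact: lerD (sqdist_le _ Cz) (lexx _).
Qed.

(* Using k + 2 instead of k makes rate >= 1/2, which absorbs the first step from an
   arbitrary x0: regularity is only assumed on the range of T. *)
Local Notation rate := (1 - (k + 2)^-1).

Lemma rate_bounds : 2^-1 <= rate < 1.
Proof.
have k2_gt0 : 0 < k + 2 by have := k_ge0; lra.
rewrite ltrBlDr ltrDl invr_gt0 k2_gt0 andbT lerBrDl.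
have : (k + 2)^-1 <= 2^-1 by rewrite lef_pV2 ?posrE //; have := k_ge0; lra.
by lra.
Qed.

Lemma sqdist_TT x : sqdist (T (T x)) <= rate * sqdist (T x).
Proof.
have k2_gt0 : 0 < k + 2 by have := k_ge0; lra.
have [z Cz Tx_z] := regular x.
have dist_le : sqdist (T x) <= (k + 2) * gap (T x).
  apply: le_trans (sqdist_le _ Cz) (le_trans Tx_z _).
  by apply: ler_wpM2r => //; rewrite lerDl.
have gap_ge : (k + 2)^-1 * sqdist (T x) <= gap (T x).
  by rewrite mulrC ler_pdivrMr // mulrC.
by have := sqdist_T (T x); rewrite mulrBl mul1r; lra.
Qed.

Lemma sqdist_iter x n : sqdist (iter n T x) <= 2 * rate ^+ n * sqdist x.
Proof.
have d_ge0 := sqdist_ge0 x; have /andP[rate_ge rate_lt1] := rate_bounds.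
have rate_ge0 : 0 <= rate by apply: le_trans rate_ge; rewrite invr_ge0.
case: n => [|n]; first by rewrite expr0 mulr1 /=; lra.
have iter_le : sqdist (iter n.+1 T x) <= rate ^+ n * sqdist (T x).
  elim: n => [|n IH]; first by rewrite expr0 mul1r.
  apply: le_trans (sqdist_TT _) _; rewrite exprS -mulrA.
  exact: ler_wpM2l IH.
apply: le_trans iter_le _; rewrite exprS.
have rn_ge0 := exprn_ge0 n rate_ge0.
have sTx_le : sqdist (T x) <= sqdist x by have := sqdist_T x; have := gap_ge0 x; lra.
apply: le_trans (ler_wpM2l rn_ge0 sTx_le) _.
by have := mulr_ge0 rn_ge0 d_ge0; nra.
Qed.

Lemma sqnorm_iter_le x z n m : C z -> (n <= m)%N ->
  sqnorm (iter m T x - z) <= sqnorm (iter n T x - z).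
Proof.
move=> Cz /subnK <-; elim: (m - n)%N => [|d IH] //=.
exact: le_trans (sqnorm_T_le _ Cz) IH.
Qed.

Lemma iter_cauchy x n m : (n <= m)%N ->
  sqnorm (iter m T x - iter n T x) <= 8 * sqdist x * rate ^+ n.
Proof.
move=> nm; have := sqdist_iter x n.
suff : sqnorm (iter m T x - iter n T x) / 4 <= sqdist (iter n T x) by lra.
apply: sqdist_glb => z Cz.
have := sqnormB_le (iter m T x) (iter n T x) z.
rewrite [sqnorm (z - _)]sqnormB_sym; have := sqnorm_iter_le x Cz nm.
by lra.
Qed.

Theorem fejer_regular_linear_convergence : exists q : R, 0 <= q < 1 /\
  forall x0, exists2 xstar, C xstar &
    exists c, 0 <= c /\ forall n, enorm (iter n T x0 - xstar) <= c * q ^+ n.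
Proof.
have /andP[rate_ge rate_lt1] := rate_bounds.
have rate_ge0 : 0 <= rate by apply: le_trans rate_ge; rewrite invr_ge0.
have rate01 : 0 <= rate < 1 by rewrite rate_ge0.
exists (Num.sqrt rate); split; first by rewrite sqrtr_ge0 /= -[X in _ < X]sqrtr1 ltr_sqrt.
move=> x0; set d := sqdist x0; set B := N%:R * (8 * d).
have B_ge0 : 0 <= B by rewrite mulr_ge0 ?mulr_ge0 ?sqdist_ge0.
have [xstar xstar_near] := cauchy_geometric_vec rate01 (iter_cauchy x0).
exists xstar.
  apply: C_closed => e e_gt0.
  have Bkd_ge0 : 0 <= 2 * B + 4 * k * d.
    by have := mulr_ge0 k_ge0 (sqdist_ge0 x0); rewrite -/d; lra.
  have [n Bkd_lt] := geometric_lt (2 * B + 4 * k * d) rate01 e_gt0.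
  have [z Cz yz_le] := regular (iter n T x0).
  exists z => //; apply: le_lt_trans Bkd_lt.
  have rn_ge : 0 <= rate ^+ n - rate ^+ n.+1.
    by rewrite subr_ge0 exprS; apply: ler_piMl; [exact: exprn_ge0 | exact: ltW].
  have xy_le : sqnorm (xstar - iter n.+1 T x0) <= B * rate ^+ n.+1.
    by rewrite sqnormB_sym; exact: xstar_near.
  have yz_le' : sqnorm (iter n.+1 T x0 - z) <= k * (2 * rate ^+ n.+1 * d).
    apply: le_trans yz_le _; apply: ler_wpM2l => //.
    exact: le_trans (gap_le_sqdist _) (sqdist_iter x0 n.+1).
  have := sqnormB_le xstar z (iter n.+1 T x0); have := mulr_ge0 Bkd_ge0 rn_ge.
  by lra.
exists (Num.sqrt B); split=> [|n]; first exact: sqrtr_ge0.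
have sqrtX : Num.sqrt rate ^+ n = Num.sqrt (rate ^+ n).
  by elim: n => [|n IH]; rewrite ?expr0 ?sqrtr1 // !exprS IH sqrtrM.
by rewrite enormE sqrtX -sqrtrM // ler_wsqrtr // xstar_near.
Qed.

End FejerRegular.

Theorem theorem1 (R : realType) (N : nat) (W U : 'M[R]_N) (lam : 'rV[R]_N)
  (fL fU M : nat) (v : 'I_M -> 'I_N) (xsig : 'cV[R]_N) :
  W^T = W -> (forall i j, 0 <= W i j) -> connected_graph W ->
  U^T *m U = 1%:M ->
  laplacian W = U *m diag_mx lam *m U^T ->
  (forall i j : 'I_N, (i <= j)%N -> lam 0 i <= lam 0 j) ->
  (forall i : 'I_N, nat_of_ord i = 0%N -> lam 0 i = 0) ->
  (1 <= fL)%N -> (fL <= fU)%N -> (fU <= N)%N ->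
  injective v ->
  Cb U fL fU xsig ->
  let s := fun i : 'I_M => Num.sg (xsig (v i) 0) in
  let C := Cb U fL fU `&` Cv v s in
  exists q : R, 0 <= q < 1 /\
    forall x0 : 'cV[R]_N,
      let xs := fun n : nat => iter n (fun x => Pb U fL fU *m Pv v s x) x0 in
      exists xstar : 'cV[R]_N,
        C xstar /\ (forall j : 'I_N, (fun n => xs n j 0) @ \oo --> xstar j 0) /\
        exists c : R, 0 <= c /\ forall n : nat, enorm (xs n - xstar) <= c * q ^+ n.
Proof.
move=> _ _ _ U_orth _ _ _ _ _ _ _ _ s C.
have s_sign i : Num.sg (s i) = s i by rewrite sgr_id.
have [k k_ge0 regular] := Cb_Cv_regular U fL fU v s.
have [q [q01 converge]] := fejer_regular_linear_convergence
  (sqnorm_closedI (Cb_closed U_orth) (Cv_closed s_sign))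
  (fun x => sqnorm_ge0 (x - Pv v s x)) k_ge0 (Pb_Pv_fejer U_orth s_sign)
  (fun x => regular _ (Pb_Cb U_orth (Pv v s x))).
exists q; split=> // x0 xs; have [xstar C_xstar [c [c_ge0 rate]]] := converge x0.
exists xstar; split=> //; split; last by exists c.
move=> j; apply: cvg_geometric_bound q01 _ => n.
apply: le_trans (rate n); move: (normr_coord_le_enorm (xs n - xstar) j).
by rewrite !mxE.
Qed.
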